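(* Let $G$ be a finite group, $\pi$ a real representation of $G$, and $\pi'=\pi\oplus\det\pi$, where $\det\pi=\det\circ\pi$ is regarded as a one-dimensional real representation. Then $\pi$ is spinorial if and only if $\pi'$ is spinorial.
   Context: A real representation on a Euclidean space $V$ is regarded as a homomorphism $\pi:G\to\mathrm{O}(V)$; it is spinorial if there is a homomorphism $\hat\pi:G\to\mathrm{Pin}(V)$ with $\rho\circ\hat\pi=\pi$, where $\mathrm{Pin}(V)$ is the Pin group of $V$ (from the Clifford algebra with $v^2=-|v|^2$) and $\rho:\mathrm{Pin}(V)\to\mathrm{O}(V)$ the standard double cover with kernel $\{\pm1\}$. *)

From HB Require Import structures.
From mathcomp Require Import all_boot all_order all_algebra all_fingroup.
From mathcomp Require Import reals.
Set Implicit Arguments. Unset Strict Implicit. Unset Printing Implicit Defensive.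
Import Order.TTheory GRing.Theory Num.Theory.
Local Open Scope ring_scope.

(* Euclidean space V = R^n (column vectors 'cV[R]_n, standard inner product).
   O(V) = orthogonal n x n matrices acting on column vectors by v |-> A *m v. *)

(* The Clifford algebra Cl(R^n) with v^2 = -|v|^2, realised on the basis
   e_A (A a subset of {0..n-1}), e_A = e_{a1} ... e_{ak} (a1 < ... < ak),
   with e_i e_j = - e_j e_i (i <> j) and e_i^2 = -1. *)
Definition Cl (R : realType) (n : nat) := {ffun {set 'I_n} -> R}.

Definition cl_symdiff n (A B : {set 'I_n}) : {set 'I_n} := (A :\: B) :|: (B :\: A).

(* e_A e_B = cl_sign A B * e_{A Δ B} *)
Definition cl_sign (R : realType) n (A B : {set 'I_n}) : R :=
  (-1) ^+ (#|[set p : 'I_n * 'I_n | (p.1 \in A) && (p.2 \in B) && (val p.2 < val p.1)%N]|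
           + #|A :&: B|).

Definition cl_mul (R : realType) n (x y : Cl R n) : Cl R n :=
  [ffun C : {set 'I_n} => \sum_(A : {set 'I_n}) \sum_(B : {set 'I_n})
               (if cl_symdiff A B == C then cl_sign R A B * x A * y B else 0)].

Definition cl_one (R : realType) n : Cl R n := [ffun A : {set 'I_n} => (A == set0)%:R].

Definition cl_vec (R : realType) n (v : 'cV[R]_n) : Cl R n :=
  [ffun A : {set 'I_n} => \sum_(i < n) v i 0 * (A == [set i])%:R].

Definition cl_alpha (R : realType) n (x : Cl R n) : Cl R n :=
  [ffun A : {set 'I_n} => (-1) ^+ #|A| * x A].

(* Clifford conjugation (transpose composed with alpha); for x in Pin(V)
   it is the inverse of x. *)
Definition cl_conj (R : realType) n (x : Cl R n) : Cl R n :=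
  [ffun A : {set 'I_n} => (-1) ^+ (#|A| + 'C(#|A|, 2)) * x A].

Definition unit_vector (R : realType) n (v : 'cV[R]_n) : Prop :=
  (v^T *m v) 0 0 = 1.

(* Pin(V): the subgroup of Cl(V)^x generated by unit vectors, i.e. the set of
   finite products of unit vectors (closed under inverses since u^-1 = -u = u u u). *)
Definition in_Pin (R : realType) n (x : Cl R n) : Prop :=
  exists s : seq 'cV[R]_n,
    (forall v, v \in s -> unit_vector v) /\
    x = foldr (@cl_mul R n) (cl_one R n) (map (@cl_vec R n) s).

(* rho : Pin(V) -> O(V), rho(x) v = alpha(x) v x^{-1}; column j of rho x is
   the image of the basis vector e_j. *)
Definition rho (R : realType) n (x : Cl R n) : 'M[R]_n :=
  \matrix_(i < n, j < n)
     (cl_mul (cl_mul (cl_alpha x) (cl_vec (delta_mx j (0 : 'I_1)))) (cl_conj x)) [set i].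

Definition orth_rep (R : realType) (gT : finGroupType) (G : {group gT}) n
    (pi : gT -> 'M[R]_n) : Prop :=
  (forall g, g \in G -> pi g *m (pi g)^T = 1%:M) /\
  {in G &, forall g h, pi (g * h)%g = pi g *m pi h}.

Definition spinorial (R : realType) (gT : finGroupType) (G : {group gT}) n
    (pi : gT -> 'M[R]_n) : Prop :=
  exists pihat : gT -> Cl R n,
    (forall g, g \in G -> in_Pin (pihat g)) /\
    {in G &, forall g h, pihat (g * h)%g = cl_mul (pihat g) (pihat h)} /\
    (forall g, g \in G -> rho (pihat g) = pi g).

Definition dsum_det (R : realType) (gT : finGroupType) n (pi : gT -> 'M[R]_n)
  : gT -> 'M[R]_(n + 1) :=
  fun g => block_mx (pi g) 0 0 (\det (pi g))%:M.

(* A product x = u_1 ... u_k of unit vectors acts through rho as the product of the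
   reflections 1 - 2 u_i u_i^T, so det (rho x) = (-1)^k.  The algebra map
   cl_lift : Cl(R^n) -> Cl(R^(n+1)) induced by u |-> (u, 0) e_last sends x to a product of
   2k unit vectors whose image under rho is diag (rho x, det (rho x)); composing a lift of
   pi with cl_lift thus lifts pi (+) det pi.  Conversely, every orthogonal matrix is a
   product of reflections (Cartan-Dieudonne) and rho identifies products of unit vectors
   only up to sign, so an element of Pin(R^(n+1)) over diag (P, det P) is +-cl_lift of an
   element of Pin(R^n); as -1 = e_0^2 for n > 0, a lift of pi (+) det pi factors through
   the injective map cl_lift. *)

From HB Require Import structures.
From mathcomp Require Import all_boot all_order all_algebra all_fingroup.
From mathcomp Require Import reals ring.
Set Implicit Arguments. Unset Strict Implicit. Unset Printing Implicit Defensive.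
Import Order.TTheory GRing.Theory Num.Theory.
Local Open Scope ring_scope.
Local Notation unit_vectors s := {in s, forall vec, unit_vector vec}.

Section SymmetricDifference.
Variable n : nat.
Implicit Types (A B C : {set 'I_n}) (i : 'I_n).
Local Notation symdiff := (@cl_symdiff n).

Lemma in_symdiff A B i : (i \in symdiff A B) = (i \in A) (+) (i \in B).
Proof. by rewrite !inE; case: (i \in A); case: (i \in B). Qed.

Lemma symdiffC A B : symdiff A B = symdiff B A.
Proof. by apply/setP => i; rewrite !in_symdiff addbC. Qed.

Lemma symdiffA A B C : symdiff A (symdiff B C) = symdiff (symdiff A B) C.
Proof. by apply/setP => i; rewrite !in_symdiff addbA. Qed.

Lemma symdiff0s A : symdiff set0 A = A.
Proof. by apply/setP => i; rewrite in_symdiff inE. Qed.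

Lemma symdiffss A : symdiff A A = set0.
Proof. by apply/setP => i; rewrite in_symdiff inE addbb. Qed.

Lemma eq_symdiff2l A B C : (symdiff A B == symdiff A C) = (B == C).
Proof.
apply/eqP/eqP => [/setP eqABC|->] //; apply/setP => i.
by have := eqABC i; rewrite !in_symdiff => /addbI.
Qed.

Lemma sign_card (R : comPzRingType) (T : finType) (P : {pred T}) :
  (-1) ^+ #|P| = \prod_t (-1) ^+ (t \in P) :> R.
Proof.
by rewrite -prodr_const big_mkcond; apply: eq_bigr => i _; case: (i \in P).
Qed.

Lemma sign_card_symdiff (R : comPzRingType) A B :
  (-1) ^+ #|symdiff A B| = (-1) ^+ #|A| * (-1) ^+ #|B| :> R.
Proof.
by rewrite !sign_card -big_split; apply: eq_bigr => i _; rewrite in_symdiff signr_addb.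
Qed.

Lemma odd_card_symdiff A B : odd #|symdiff A B| = odd #|A| (+) odd #|B|.
Proof. by apply: (@signr_inj int); rewrite signr_addb !signr_odd sign_card_symdiff. Qed.
End SymmetricDifference.

Section BladeSigns.
Variables (R : realType) (n : nat).
Implicit Types (A B C X : {set 'I_n}) (i j : 'I_n).
Local Notation symdiff := (@cl_symdiff n).

(* [e_A e_B = blade_sign A B e_(A symdiff B)]: each pair [j <= i] with [i] in [A] and
   [j] in [B] costs one transposition, or one [e_i^2 = -1] when [i = j]. *)
Definition blade_sign A B : R :=
  \prod_i \prod_j (-1) ^+ [&& i \in A, j \in B & (j <= i)%N].

Lemma cl_signE A B : cl_sign R A B = blade_sign A B.
Proof.
have split_le i j : (-1) ^+ [&& i \in A, j \in B & (j <= i)%N] =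
    (-1) ^+ [&& i \in A, j \in B & (j < i)%N] * (-1) ^+ [&& i \in A, j \in B & j == i] :> R.
  rewrite -signr_addb; congr (_ ^+ _).
  by rewrite -val_eqE; case: (i \in A); case: (j \in B); case: (ltngtP j i).
rewrite /cl_sign exprD !sign_card /blade_sign.
under [RHS]eq_bigr => i _ do rewrite (eq_bigr _ (fun j _ => split_le i j)) big_split /=.
rewrite big_split /=; congr (_ * _).
  by rewrite pair_big; apply: eq_big => // -[i j] _; rewrite inE /= andbA.
apply: eq_bigr => i _; rewrite (bigD1 i) //= big1 ?mulr1 => [|j /negPf->]; last by rewrite !andbF.
by rewrite inE eqxx andbT.
Qed.

Lemma blade_signDl A B C :
  blade_sign (symdiff A B) C = blade_sign A C * blade_sign B C.
Proof.
rewrite -big_split; apply: eq_bigr => i _; rewrite -big_split; apply: eq_bigr => j _ /=.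
rewrite in_symdiff -signr_addb.
by case: (i \in A); case: (i \in B); case: (j \in C); case: (j <= i)%N.
Qed.

Lemma blade_signDr A B C :
  blade_sign A (symdiff B C) = blade_sign A B * blade_sign A C.
Proof.
rewrite -big_split; apply: eq_bigr => i _; rewrite -big_split; apply: eq_bigr => j _ /=.
rewrite in_symdiff -signr_addb.
by case: (i \in A); case: (j \in B); case: (j \in C); case: (j <= i)%N.
Qed.

Lemma blade_sign0l B : blade_sign set0 B = 1.
Proof. by rewrite /blade_sign big1 // => i _; rewrite big1 // => j _; rewrite inE. Qed.

Lemma blade_sign0r A : blade_sign A set0 = 1.
Proof. by rewrite /blade_sign big1 // => i _; rewrite big1 // => j _; rewrite inE andbF. Qed.

Lemma blade_signK A B : blade_sign A B * blade_sign A B = 1.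
Proof. by rewrite -blade_signDr symdiffss blade_sign0r. Qed.

Lemma prod_sign_pred1 (P : pred 'I_n) i :
  \prod_j (-1) ^+ (P j && (j == i)) = (-1) ^+ P i :> R.
Proof. by rewrite (bigD1 i) //= eqxx andbT big1 ?mulr1 // => j /negPf->; rewrite andbF. Qed.

Lemma blade_sign_set1r X j :
  blade_sign X [set j] = \prod_i (-1) ^+ ((i \in X) && (j <= i)%N).
Proof.
apply: eq_bigr => i _; rewrite -(prod_sign_pred1 (fun k => (i \in X) && (k <= i)%N)).
by apply: eq_bigr => k _; rewrite inE; case: (i \in X); case: (k == j); case: (k <= i)%N.
Qed.

Lemma blade_sign_set1l X i :
  blade_sign [set i] X = \prod_j (-1) ^+ ((j \in X) && (j <= i)%N).
Proof.
rewrite /blade_sign exchange_big; apply: eq_bigr => j _.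
rewrite -(prod_sign_pred1 (fun k => (j \in X) && (j <= k)%N)).
by apply: eq_bigr => k _; rewrite inE; case: (j \in X); case: (k == i); case: (j <= k)%N.
Qed.

Lemma blade_sign11 i j : blade_sign [set i] [set j] = (-1) ^+ (j <= i)%N.
Proof.
rewrite blade_sign_set1r -(prod_sign_pred1 (fun k => (j <= k)%N)).
by apply: eq_bigr => k _; rewrite inE andbC.
Qed.

Lemma blade_sign_commute1 X i :
  blade_sign X [set i] * blade_sign [set i] X = (-1) ^+ (#|X| + (i \in X)).
Proof.
rewrite blade_sign_set1r blade_sign_set1l exprD sign_card.
rewrite -(prod_sign_pred1 (mem X)) -!big_split; apply: eq_bigr => j _ /=.
rewrite -!signr_addb -val_eqE; congr (_ ^+ _).
by case: (j \in X); case: (ltngtP i j).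
Qed.

Lemma blade_sign_self A : blade_sign A A = (-1) ^+ (#|A| + 'C(#|A|, 2)).
Proof.
elim: {A}#|A|.+1 {-2}A (ltnSn #|A|) => // k IHk A.
have [->|[i Ai]] := set_0Vmem A; first by rewrite blade_sign0l cards0.
have iNA' : i \notin A :\ i by rewrite !inE eqxx.
have cardA : #|A| = #|A :\ i|.+1 by rewrite (cardsD1 i A) Ai.
rewrite cardA ltnS => /IHk IHA'.
have defA : A = symdiff (A :\ i) [set i].
  apply/setP => j; rewrite in_symdiff !inE.
  by case: (eqVneq j i) => [->|_]; rewrite ?Ai ?addbF.
rewrite [in LHS]defA blade_signDl !blade_signDr blade_sign11 leqnn IHA'.
rewrite !mulrA -(mulrA _ (blade_sign _ [set i])) blade_sign_commute1 (negPf iNA') addn0.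
by rewrite binS bin1 -!exprD; congr (_ ^+ _) => /=; ring.
Qed.
End BladeSigns.

Section CliffordRing.
Variables (R : realType) (n : nat).
Implicit Types (A B C D E F : {set 'I_n}) (x y z : Cl R n).
Local Notation symdiff := (@cl_symdiff n).
Local Notation bsign := (@blade_sign R n).

HB.instance Definition _ := GRing.Lmodule.copy (Cl R n) {ffun {set 'I_n} -> R^o}.

Lemma cl_mulE x y C : cl_mul x y C =
  \sum_A \sum_B (if symdiff A B == C then bsign A B * x A * y B else 0).
Proof. by rewrite ffunE; apply: eq_bigr => A _; apply: eq_bigr => B _; rewrite cl_signE. Qed.

Lemma cl_coefD x y A : (x + y) A = x A + y A.
Proof. by rewrite ffunE. Qed.

Lemma cl_coefZ k x A : (k *: x) A = k * x A.
Proof. by rewrite ffunE. Qed.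

Lemma cl_oneE A : cl_one R n A = (A == set0)%:R.
Proof. by rewrite ffunE. Qed.

Lemma cl_mul1x : left_id (cl_one R n) (@cl_mul R n).
Proof.
move=> y; apply/ffunP => C; rewrite cl_mulE (bigD1 set0) //= [X in _ + X]big1 ?addr0.
  under eq_bigr do rewrite cl_oneE eqxx symdiff0s blade_sign0l !mul1r.
  by rewrite -big_mkcond big_pred1_eq.
by move=> A /negPf nzA; apply: big1 => B _; rewrite cl_oneE nzA mulr0 mul0r if_same.
Qed.

Lemma cl_mulx1 : right_id (cl_one R n) (@cl_mul R n).
Proof.
move=> x; apply/ffunP => C.
have -> : x C = \sum_A (if A == C then x A else 0) by rewrite -big_mkcond big_pred1_eq.
rewrite cl_mulE; apply: eq_bigr => A _; rewrite (bigD1 set0) //= [X in _ + X]big1 ?addr0.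
  by rewrite cl_oneE eqxx symdiffC symdiff0s blade_sign0r mul1r mulr1.
by move=> B /negPf nzB; rewrite cl_oneE nzB mulr0 if_same.
Qed.

Let cl_mul3 x y z D := \sum_A \sum_B \sum_E
  (if symdiff (symdiff A B) E == D
   then bsign A B * bsign (symdiff A B) E * (x A * y B * z E) else 0).

Lemma cl_mulA_expandl x y z D : cl_mul (cl_mul x y) z D = cl_mul3 x y z D.
Proof.
rewrite cl_mulE.
transitivity (\sum_C \sum_E \sum_A \sum_B (if symdiff A B == C then
    (if symdiff C E == D then bsign A B * bsign C E * (x A * y B * z E) else 0) else 0)).
  apply: eq_bigr => C _; apply: eq_bigr => E _; rewrite cl_mulE.
  case: ifP => _; last by rewrite big1 // => A _; rewrite big1 // => B _; rewrite if_same.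
  rewrite mulr_sumr mulr_suml; apply: eq_bigr => A _.
  rewrite mulr_sumr mulr_suml; apply: eq_bigr => B _.
  by case: ifP => _; [ring | rewrite mulr0 mul0r].
transitivity (\sum_E \sum_A \sum_B \sum_C (if symdiff A B == C then
    (if symdiff C E == D then bsign A B * bsign C E * (x A * y B * z E) else 0) else 0)).
  rewrite exchange_big; apply: eq_bigr => E _.
  by rewrite exchange_big; apply: eq_bigr => A _; rewrite exchange_big.
rewrite exchange_big; apply: eq_bigr => A _; rewrite exchange_big; apply: eq_bigr => B _.
apply: eq_bigr => E _.
by rewrite -big_mkcond (big_pred1 (symdiff A B)) // => C; rewrite eq_sym.
Qed.

Lemma cl_mulA_expandr x y z D : cl_mul x (cl_mul y z) D = cl_mul3 x y z D.
Proof.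
rewrite cl_mulE; apply: eq_bigr => A _.
transitivity (\sum_F \sum_B \sum_E (if symdiff B E == F then
    (if symdiff A F == D then bsign A F * bsign B E * (x A * y B * z E) else 0) else 0)).
  apply: eq_bigr => F _; rewrite cl_mulE.
  case: ifP => _; last by rewrite big1 // => B _; rewrite big1 // => E _; rewrite if_same.
  rewrite mulr_sumr; apply: eq_bigr => B _; rewrite mulr_sumr; apply: eq_bigr => E _.
  by case: ifP => _; [ring | rewrite mulr0].
rewrite exchange_big /=; apply: eq_bigr => B _.
rewrite exchange_big /=; apply: eq_bigr => E _.
rewrite -big_mkcond (big_pred1 (symdiff B E)) => [|F]; last by rewrite eq_sym.
by rewrite symdiffA blade_signDl blade_signDr !mulrA.
Qed.

Lemma cl_mulA : associative (@cl_mul R n).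
Proof. by move=> x y z; apply/ffunP => D; rewrite cl_mulA_expandl cl_mulA_expandr. Qed.

Lemma cl_mulDl : left_distributive (@cl_mul R n) +%R.
Proof.
move=> x y z; apply/ffunP => C; rewrite cl_coefD !cl_mulE -big_split.
apply: eq_bigr => A _; rewrite -big_split; apply: eq_bigr => B _ /=; rewrite cl_coefD.
by case: ifP => _; [ring | rewrite addr0].
Qed.

Lemma cl_mulDr : right_distributive (@cl_mul R n) +%R.
Proof.
move=> x y z; apply/ffunP => C; rewrite cl_coefD !cl_mulE -big_split.
apply: eq_bigr => A _; rewrite -big_split; apply: eq_bigr => B _ /=; rewrite cl_coefD.
by case: ifP => _; [ring | rewrite addr0].
Qed.

Lemma cl_one_neq0 : cl_one R n != 0.
Proof. by apply/eqP => /ffunP/(_ set0); rewrite !ffunE eqxx => /eqP; rewrite oner_eq0. Qed.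

HB.instance Definition _ := GRing.Zmodule_isNzRing.Build (Cl R n)
  cl_mulA cl_mul1x cl_mulx1 cl_mulDl cl_mulDr cl_one_neq0.

Lemma cl_coefM x y C : (x * y) C =
  \sum_A \sum_B (if symdiff A B == C then bsign A B * x A * y B else 0).
Proof. exact: cl_mulE. Qed.

Lemma cl_scalerAl k x y : k *: (x * y) = (k *: x) * y.
Proof.
apply/ffunP => C; rewrite cl_coefZ !cl_coefM mulr_sumr; apply: eq_bigr => A _.
rewrite mulr_sumr; apply: eq_bigr => B _; rewrite cl_coefZ.
by case: ifP => _; [ring | rewrite mulr0].
Qed.

HB.instance Definition _ := GRing.Lmodule_isLalgebra.Build R (Cl R n) cl_scalerAl.

Lemma cl_scalerAr k x y : k *: (x * y) = x * (k *: y).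
Proof.
apply/ffunP => C; rewrite cl_coefZ !cl_coefM mulr_sumr; apply: eq_bigr => A _.
rewrite mulr_sumr; apply: eq_bigr => B _; rewrite cl_coefZ.
by case: ifP => _; [ring | rewrite mulr0].
Qed.

HB.instance Definition _ := GRing.Lalgebra_isAlgebra.Build R (Cl R n) cl_scalerAr.

End CliffordRing.

Section CliffordVectors.
Variables (R : realType) (n : nat).
Implicit Types (A B C : {set 'I_n}) (i j : 'I_n) (x y : Cl R n) (u v w : 'cV[R]_n).
Local Notation symdiff := (@cl_symdiff n).
Local Notation bsign := (@blade_sign R n).

Definition vdot u w : R := (u^T *m w) 0 0.

Lemma vdotE u w : vdot u w = \sum_i u i 0 * w i 0.
Proof. by rewrite /vdot mxE; apply: eq_bigr => i _; rewrite mxE. Qed.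

Lemma cl_vecE u A : cl_vec u A = \sum_i u i 0 * (A == [set i])%:R.
Proof. by rewrite ffunE. Qed.

Fact cl_vec_is_linear : linear (@cl_vec R n).
Proof.
move=> k u w; apply/ffunP => A; rewrite cl_coefD cl_coefZ !cl_vecE mulr_sumr -big_split.
by apply: eq_bigr => i _ /=; rewrite !mxE; ring.
Qed.

HB.instance Definition _ :=
  GRing.isLinear.Build R 'cV[R]_n (Cl R n) *:%R (@cl_vec R n) cl_vec_is_linear.

Lemma cl_vec_coef1 u i : cl_vec u [set i] = u i 0.
Proof.
rewrite cl_vecE (bigD1 i) //= eqxx mulr1 big1 ?addr0 // => j neq_ji.
by rewrite (inj_eq set1_inj) eq_sym (negPf neq_ji) mulr0.
Qed.

Lemma sum_cl_vec u (F : {set 'I_n} -> R) :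
  \sum_A cl_vec u A * F A = \sum_i u i 0 * F [set i].
Proof.
under eq_bigr do rewrite cl_vecE mulr_suml.
rewrite exchange_big; apply: eq_bigr => i _.
rewrite (bigD1 [set i]) //= eqxx mulr1 big1 ?addr0 // => A /negPf->.
by rewrite mulr0 mul0r.
Qed.

Lemma cl_coef_vecM u y C : (cl_vec u * y) C =
  \sum_i \sum_B (if symdiff [set i] B == C then bsign [set i] B * u i 0 * y B else 0).
Proof.
rewrite cl_coefM.
transitivity (\sum_A cl_vec u A * \sum_B (if symdiff A B == C then bsign A B * y B else 0)).
  apply: eq_bigr => A _; rewrite mulr_sumr; apply: eq_bigr => B _.
  by case: ifP => _; [ring | rewrite mulr0].
rewrite sum_cl_vec; apply: eq_bigr => i _; rewrite mulr_sumr; apply: eq_bigr => B _.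
by case: ifP => _; [ring | rewrite mulr0].
Qed.

Lemma cl_coefM_vec x u C : (x * cl_vec u) C =
  \sum_A \sum_i (if symdiff A [set i] == C then bsign A [set i] * x A * u i 0 else 0).
Proof.
rewrite cl_coefM; apply: eq_bigr => A _.
transitivity (\sum_B cl_vec u B * (if symdiff A B == C then bsign A B * x A else 0)).
  by apply: eq_bigr => B _; case: ifP => _; [ring | rewrite mulr0].
by rewrite sum_cl_vec; apply: eq_bigr => i _; case: ifP => _; [ring | rewrite mulr0].
Qed.

Lemma cl_coef_vecM_vec u w C : (cl_vec u * cl_vec w) C =
  \sum_i \sum_j (if symdiff [set i] [set j] == C
                 then (-1) ^+ (j <= i)%N * u i 0 * w j 0 else 0).
Proof.
rewrite cl_coef_vecM; apply: eq_bigr => i _.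
transitivity (\sum_B cl_vec w B *
    (if symdiff [set i] B == C then bsign [set i] B * u i 0 else 0)).
  by apply: eq_bigr => B _; case: ifP => _; [ring | rewrite mulr0].
rewrite sum_cl_vec; apply: eq_bigr => j _; rewrite blade_sign11.
by case: ifP => _; [ring | rewrite mulr0].
Qed.

Lemma cl_vec_anticomm u w :
  cl_vec u * cl_vec w + cl_vec w * cl_vec u = (- 2 * vdot u w)%:A.
Proof.
apply/ffunP => C; rewrite cl_coefD cl_coefZ cl_oneE !cl_coef_vecM_vec.
rewrite [X in _ + X]exchange_big -big_split vdotE mulr_sumr mulr_suml.
apply: eq_bigr => i _; rewrite -big_split (bigD1 i) //= [X in _ + X]big1 ?addr0.
  rewrite symdiffss [set0 == C]eq_sym leqnn.
  by case: (C == set0) => /=; [rewrite expr1; ring | rewrite addr0 mulr0].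
move=> j neq_ji; rewrite [symdiff [set j] _]symdiffC.
case: ifP => _; last by rewrite addr0.
by move: neq_ji; rewrite -val_eqE; case: (ltngtP i j) => // _ _; ring.
Qed.

Lemma cl_vec_sqr u : cl_vec u * cl_vec u = (- vdot u u)%:A.
Proof.
apply: (@scalerI _ _ 2); first by rewrite pnatr_eq0.
by rewrite scaler_nat mulr2n cl_vec_anticomm scalerA; congr (_ *: _); ring.
Qed.

Lemma cl_vec_unit_sqr u : unit_vector u -> cl_vec u * cl_vec u = -1.
Proof. by move=> u1; rewrite cl_vec_sqr [vdot u u]u1 scaleN1r. Qed.

End CliffordVectors.

Section CliffordInvolutions.
Variables (R : realType) (n : nat).
Implicit Types (A B C : {set 'I_n}) (x y : Cl R n) (u : 'cV[R]_n).
Local Notation symdiff := (@cl_symdiff n).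
Local Notation bsign := (@blade_sign R n).

Lemma cl_alphaE x A : cl_alpha x A = (-1) ^+ #|A| * x A.
Proof. by rewrite ffunE. Qed.

Lemma cl_conjE x A : cl_conj x A = bsign A A * x A.
Proof. by rewrite ffunE blade_sign_self. Qed.

Fact cl_alpha_is_linear : linear (@cl_alpha R n).
Proof.
by move=> k x y; apply/ffunP => A; rewrite !(cl_alphaE, cl_coefD, cl_coefZ); ring.
Qed.

HB.instance Definition _ :=
  GRing.isLinear.Build R (Cl R n) (Cl R n) *:%R (@cl_alpha R n) cl_alpha_is_linear.

Fact cl_alpha_is_monoid_morphism : monoid_morphism (@cl_alpha R n).
Proof.
split.
  apply/ffunP => A; rewrite cl_alphaE cl_oneE.
  by case: eqP => [->|_]; rewrite ?cards0 ?mulr1 ?mulr0.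
move=> x y; apply/ffunP => C; rewrite cl_alphaE !cl_coefM mulr_sumr.
apply: eq_bigr => A _; rewrite mulr_sumr; apply: eq_bigr => B _; rewrite !cl_alphaE.
by case: eqP => [<-|_]; [rewrite sign_card_symdiff; ring | rewrite mulr0].
Qed.

HB.instance Definition _ :=
  GRing.isMonoidMorphism.Build (Cl R n) (Cl R n) (@cl_alpha R n)
    cl_alpha_is_monoid_morphism.

Lemma cl_alpha_vec u : cl_alpha (cl_vec u) = - cl_vec u.
Proof.
apply/ffunP => A; rewrite cl_alphaE -scaleN1r cl_coefZ !cl_vecE !mulr_sumr.
apply: eq_bigr => i _.
by case: eqP => [->|_]; rewrite ?cards1 ?mulr0 // expr1 mulrA.
Qed.

Fact cl_conj_is_linear : linear (@cl_conj R n).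
Proof.
by move=> k x y; apply/ffunP => A; rewrite !(cl_conjE, cl_coefD, cl_coefZ); ring.
Qed.

HB.instance Definition _ :=
  GRing.isLinear.Build R (Cl R n) (Cl R n) *:%R (@cl_conj R n) cl_conj_is_linear.

Lemma cl_conj1 : cl_conj 1 = 1 :> Cl R n.
Proof.
apply/ffunP => A; rewrite cl_conjE cl_oneE.
by case: eqP => [->|_]; rewrite ?blade_sign0l ?mul1r ?mulr0.
Qed.

Lemma cl_conjM x y : cl_conj (x * y) = cl_conj y * cl_conj x.
Proof.
apply/ffunP => C; rewrite cl_conjE cl_coefM [RHS]cl_coefM [RHS]exchange_big mulr_sumr.
apply: eq_bigr => A _; rewrite mulr_sumr; apply: eq_bigr => B _.
rewrite !cl_conjE [symdiff B A]symdiffC.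
case: eqP => [<-|_]; last by rewrite mulr0.
by rewrite blade_signDl !blade_signDr -[RHS]mul1r -(blade_signK R A B); ring.
Qed.

Lemma cl_conj_vec u : cl_conj (cl_vec u) = - cl_vec u.
Proof.
apply/ffunP => A; rewrite cl_conjE -scaleN1r cl_coefZ !cl_vecE !mulr_sumr.
apply: eq_bigr => i _.
by case: eqP => [->|_]; rewrite ?mulr0 // blade_sign11 leqnn mulrA.
Qed.

End CliffordInvolutions.

Section PinProducts.
Variables (R : realType) (n : nat).
Implicit Types (s : seq 'cV[R]_n) (u v w : 'cV[R]_n) (x : Cl R n).

Definition reflmx u : 'M[R]_n := 1%:M - 2 *: (u *m u^T).

Definition cl_twist x v := cl_alpha x * cl_vec v * cl_conj x.

Lemma foldr_cl_mulE s :
  foldr (@cl_mul R n) (cl_one R n) (map (@cl_vec R n) s) = \prod_(u <- s) cl_vec u.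
Proof. by rewrite foldr_map unlock. Qed.

Lemma in_PinP x :
  in_Pin x <-> exists2 s, unit_vectors s & x = \prod_(u <- s) cl_vec u.
Proof. by split=> [[s [s1 ->]]|[s s1 ->]]; exists s; rewrite ?foldr_cl_mulE. Qed.

Lemma unit_vectors_cons u s :
  unit_vectors (u :: s) <-> unit_vector u /\ unit_vectors s.
Proof.
split=> [us|[u1 s1] v]; last by rewrite inE => /predU1P[->|/s1].
by split=> [|v vs]; apply: us; rewrite inE ?eqxx ?vs ?orbT.
Qed.

Lemma reflmx_mul u w : reflmx u *m w = w - (2 * vdot u w) *: u.
Proof.
rewrite mulmxBl mul1mx -scalemxAl -mulmxA -scalerA; congr (_ - _ *: _).
by apply/matrixP => i j; rewrite (ord1 j) !mxE big_ord1 mulrC.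
Qed.

Lemma cl_vec_reflect u w : unit_vector u ->
  cl_vec u * cl_vec w * cl_vec u = cl_vec (reflmx u *m w).
Proof.
move=> u1; have -> : cl_vec u * cl_vec w = (- 2 * vdot u w)%:A - cl_vec w * cl_vec u.
  by rewrite -cl_vec_anticomm addrK.
rewrite mulrBl -mulrA cl_vec_unit_sqr // mulrN1 opprK -scalerAl mul1r.
by rewrite reflmx_mul linearB linearZ /= mulNr scaleNr addrC.
Qed.

Lemma cl_twist_prod s v : unit_vectors s ->
  cl_twist (\prod_(u <- s) cl_vec u) v = cl_vec ((\prod_(u <- s) reflmx u) *m v).
Proof.
elim: s v => [|u s IHs] v.
  by rewrite !big_nil /cl_twist rmorph1 cl_conj1 mul1r mulr1 mul1mx.
case/unit_vectors_cons => u1 s1; rewrite !big_cons.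
have -> : cl_twist (cl_vec u * \prod_(u <- s) cl_vec u) v =
          cl_vec u * cl_twist (\prod_(u <- s) cl_vec u) v * cl_vec u.
  by rewrite /cl_twist rmorphM /= cl_conjM cl_alpha_vec cl_conj_vec !mulrN !mulNr opprK !mulrA.
by rewrite IHs // cl_vec_reflect // mulmxA.
Qed.

Lemma rho_prod s : unit_vectors s ->
  rho (\prod_(u <- s) cl_vec u) = \prod_(u <- s) reflmx u.
Proof.
move=> s1; apply/matrixP => i j.
rewrite mxE; change (cl_twist (\prod_(u <- s) cl_vec u) (delta_mx j 0) [set i] =
                     (\prod_(u <- s) reflmx u) i j).
by rewrite cl_twist_prod // cl_vec_coef1 -colE mxE.
Qed.

Lemma cl_conj_prod s :
  cl_conj (\prod_(u <- s) cl_vec u) = \prod_(u <- map -%R (rev s)) cl_vec u.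
Proof.
elim: s => [|u s IHs]; first by rewrite !big_nil cl_conj1.
rewrite big_cons cl_conjM IHs rev_cons -cats1 map_cat big_cat /= big_seq1.
by rewrite cl_conj_vec linearN.
Qed.

Lemma cl_prod_mulconj s : unit_vectors s ->
  \prod_(u <- s) cl_vec u * cl_conj (\prod_(u <- s) cl_vec u) = 1.
Proof.
elim: s => [|u s IHs]; first by rewrite big_nil cl_conj1 mulr1.
case/unit_vectors_cons => u1 s1; rewrite big_cons cl_conjM cl_conj_vec !mulrN.
by rewrite -mulrA (mulrA (\prod_(u <- s) _)) IHs // mul1r cl_vec_unit_sqr // opprK.
Qed.

Lemma cl_prod_conjmul s : unit_vectors s ->
  cl_conj (\prod_(u <- s) cl_vec u) * \prod_(u <- s) cl_vec u = 1.
Proof.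
elim: s => [|u s IHs]; first by rewrite big_nil cl_conj1 mulr1.
case/unit_vectors_cons => u1 s1; rewrite big_cons cl_conjM cl_conj_vec mulrN mulNr.
by rewrite -mulrA (mulrA (cl_vec u)) cl_vec_unit_sqr // mulN1r mulrN opprK IHs.
Qed.

Lemma reflmxN u : reflmx (- u) = reflmx u.
Proof. by rewrite /reflmx linearN /= mulmxN mulNmx opprK. Qed.

Lemma reflmx_tr u : (reflmx u)^T = reflmx u.
Proof. by rewrite /reflmx linearB /= linearZ /= trmx1 trmx_mul trmxK. Qed.

Lemma reflmxK u : unit_vector u -> reflmx u *m reflmx u = 1%:M.
Proof.
move=> u1; have utu : u^T *m u = 1%:M by apply/matrixP => i j; rewrite !ord1 u1 mxE.
have uuT_idem : (u *m u^T) *m (u *m u^T) = u *m u^T.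
  by rewrite mulmxA -(mulmxA u) utu mulmx1.
rewrite /reflmx mulmxBl !mulmxBr mul1mx mulmx1 -!scalemxAl -!scalemxAr uuT_idem.
rewrite scalerA !mul1mx.
by apply/matrixP => i j; rewrite !mxE; ring.
Qed.

Lemma prod_reflmx_mulV s : unit_vectors s ->
  (\prod_(u <- s) reflmx u) * \prod_(u <- map -%R (rev s)) reflmx u = 1.
Proof.
elim: s => [|u s IHs]; first by rewrite !big_nil mulr1.
case/unit_vectors_cons => u1 s1.
rewrite rev_cons -cats1 map_cat big_cat big_cons /= big_seq1 reflmxN.
by rewrite -mulrA (mulrA (\prod_(u <- s) _)) IHs // mul1r; apply: reflmxK.
Qed.
End PinProducts.

Section PinKernel.
Variables (R : realType) (n : nat).
Implicit Types (A B C : {set 'I_n}) (i j : 'I_n) (x z : Cl R n) (s : seq 'cV[R]_n).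
Local Notation symdiff := (@cl_symdiff n).
Local Notation bsign := (@blade_sign R n).
Local Notation e i := (cl_vec (delta_mx i 0 : 'cV[R]_n)).

Lemma cl_coefM_gen x i C :
  (x * e i) C = \sum_A (if symdiff A [set i] == C then bsign A [set i] * x A else 0).
Proof.
rewrite cl_coefM_vec; apply: eq_bigr => A _.
rewrite (bigD1 i) //= [X in _ + X]big1 ?addr0 => [|j /negPf neq_ji].
  by rewrite mxE !eqxx mulr1.
by rewrite mxE neq_ji mulr0 if_same.
Qed.

Lemma cl_coef_genM x i C :
  (e i * x) C = \sum_B (if symdiff [set i] B == C then bsign [set i] B * x B else 0).
Proof.
rewrite cl_coef_vecM (bigD1 i) //= [X in _ + X]big1 ?addr0 => [|j /negPf neq_ji].
  by apply: eq_bigr => B _; rewrite mxE !eqxx mulr1.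
by apply: big1 => B _; rewrite mxE neq_ji mulr0 mul0r if_same.
Qed.

(* For [i] in [A], the coefficients of [e_(A symdiff {i})] on the two sides are
   [(-1)^|A|] and [(-1)^(|A|+1)] times the same multiple of [z A]. *)
Lemma cl_twisted_central_scalar z :
  (forall v, cl_alpha z * cl_vec v = cl_vec v * z) -> z = (z set0)%:A.
Proof.
move=> central; apply/ffunP => A; rewrite cl_coefZ cl_oneE.
have [->|/set0Pn[i Ai]] := eqVneq A set0; first by rewrite mulr1.
rewrite mulr0; have /ffunP/(_ (symdiff A [set i])) := central (delta_mx i 0).
rewrite cl_coefM_gen cl_coef_genM.
rewrite (eq_bigr (fun B => if B == A then bsign B [set i] * cl_alpha z B else 0)); last first.
  by move=> B _; rewrite symdiffC [symdiff A _]symdiffC eq_symdiff2l.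
rewrite -big_mkcond big_pred1_eq.
rewrite (eq_bigr (fun B => if B == A then bsign [set i] B * z B else 0)); last first.
  by move=> B _; rewrite [symdiff A _]symdiffC eq_symdiff2l.
rewrite -big_mkcond big_pred1_eq cl_alphaE => /(congr1 ( *%R (bsign A [set i]))).
rewrite !mulrA blade_signK mul1r blade_sign_commute1 Ai exprD expr1 mulrN1 => eq_opp.
have : 2 * ((-1) ^+ #|A| * z A) = 0 by rewrite mulr_natl mulr2n {1}eq_opp mulNr addNr.
by move/eqP; rewrite !mulf_eq0 pnatr_eq0 signr_eq0 => /eqP.
Qed.

Lemma cl_prod_pm1_of_reflmx1 s : unit_vectors s -> \prod_(u <- s) reflmx u = 1 ->
  \prod_(u <- s) cl_vec u = 1 \/ \prod_(u <- s) cl_vec u = -1.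
Proof.
set z := \prod_(u <- s) cl_vec u => s1 prod1.
have central v : cl_alpha z * cl_vec v = cl_vec v * z.
  have twist_v := cl_twist_prod v s1; rewrite prod1 mul1mx /cl_twist -/z in twist_v.
  by rewrite -[in RHS]twist_v -!mulrA cl_prod_conjmul // mulr1.
have zE := cl_twisted_central_scalar central; set c := z set0 in zE.
have /(congr1 (fun x : Cl R n => x set0)) := cl_prod_mulconj s1.
rewrite -/z zE linearZ /= cl_conj1 -scalerAl -scalerAr mulr1 scalerA cl_coefZ cl_oneE eqxx.
rewrite mulr1 -expr2 => /eqP; rewrite sqrf_eq1 => /orP[|] /eqP c1.
  by left; rewrite c1 scale1r.
by right; rewrite c1 scaleN1r.
Qed.

Lemma cl_prod_pm_of_reflmx s1 s2 : unit_vectors s1 -> unit_vectors s2 ->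
  \prod_(u <- s1) reflmx u = \prod_(u <- s2) reflmx u ->
  \prod_(u <- s1) cl_vec u = \prod_(u <- s2) cl_vec u \/
  \prod_(u <- s1) cl_vec u = - \prod_(u <- s2) cl_vec u.
Proof.
move=> s1u s2u eq_refl.
have s1s2'u : unit_vectors (s1 ++ map -%R (rev s2)).
  move=> v; rewrite mem_cat => /orP[/s1u //|/mapP[w]].
  rewrite mem_rev => /s2u w1 ->.
  by rewrite /unit_vector mulmxN (raddfN (@trmx R n 1)) mulNmx opprK.
have := cl_prod_pm1_of_reflmx1 s1s2'u.
rewrite !big_cat /= eq_refl prod_reflmx_mulV // -cl_conj_prod.
case=> // /(congr1 ( *%R^~ (\prod_(u <- s2) cl_vec u))).
  by rewrite -mulrA cl_prod_conjmul // mulr1 mul1r; left.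
by rewrite -mulrA cl_prod_conjmul // mulr1 mulN1r; right.
Qed.
End PinKernel.

Section Reflections.
Variables (R : realType) (n : nat).
Implicit Types (a b c u v w : 'cV[R]_n) (A : 'M[R]_n) (s : seq 'cV[R]_n).

Lemma vdotC a b : vdot a b = vdot b a.
Proof. by rewrite !vdotE; apply: eq_bigr => i _; rewrite mulrC. Qed.

Lemma vdotBl a b c : vdot (a - b) c = vdot a c - vdot b c.
Proof. by rewrite !vdotE -sumrB; apply: eq_bigr => i _; rewrite !mxE mulrBl. Qed.

Lemma vdotZl k a b : vdot (k *: a) b = k * vdot a b.
Proof. by rewrite !vdotE mulr_sumr; apply: eq_bigr => i _; rewrite !mxE mulrA. Qed.

Lemma vdot_ge0 a : 0 <= vdot a a.
Proof. by rewrite vdotE sumr_ge0 // => i _; rewrite -expr2 sqr_ge0. Qed.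

Lemma vdot_eq0 a : (vdot a a == 0) = (a == 0).
Proof.
apply/eqP/eqP => [a0|->]; last by rewrite vdotE big1 // => i _; rewrite mxE mul0r.
rewrite vdotE in a0; apply/matrixP => i j; rewrite !ord1 mxE; apply/eqP.
by rewrite -sqrf_eq0 expr2 (psumr_eq0P _ a0) // => k _; rewrite -expr2 sqr_ge0.
Qed.

Lemma vdot_delta (k : 'I_n) v : vdot (delta_mx k 0) v = v k 0.
Proof.
rewrite vdotE (bigD1 k) //= big1 ?addr0 => [|i /negPf neq_ik]; last by rewrite mxE neq_ik mul0r.
by rewrite mxE !eqxx mul1r.
Qed.

Lemma vdot_col A i j : vdot (col i A) (col j A) = (A^T *m A) i j.
Proof. by rewrite vdotE mxE; apply: eq_bigr => k _; rewrite !mxE. Qed.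

Let normalize w := (Num.sqrt (vdot w w))^-1 *: w.

Lemma unit_vector_normalize w : w != 0 -> unit_vector (normalize w).
Proof.
rewrite -vdot_eq0 => nz; have N0 : 0 <= vdot w w := vdot_ge0 w.
change (vdot (normalize w) (normalize w) = 1).
rewrite vdotZl vdotC vdotZl mulrA -expr2 exprVn sqr_sqrtr //.
by rewrite mulVf.
Qed.

Lemma reflmx_orth u c : vdot u c = 0 -> reflmx u *m c = c.
Proof. by rewrite reflmx_mul => ->; rewrite mulr0 scale0r subr0. Qed.

Lemma reflmx_swap a b : vdot a a = vdot b b -> a != b ->
  reflmx (normalize (a - b)) *m a = b.
Proof.
move=> ab neq_ab; set w := a - b.
have nz : vdot w w != 0 by rewrite vdot_eq0 subr_eq0.
have ww : 2 * vdot w a = vdot w w.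
  by rewrite /w !vdotBl ![vdot _ (a - b)]vdotC !vdotBl (vdotC a b) ab; ring.
have N0 : 0 <= vdot w w := vdot_ge0 w.
rewrite reflmx_mul vdotZl scalerA; set k := (Num.sqrt (vdot w w))^-1.
have -> : 2 * (k * vdot w a) * k = 1.
  transitivity (2 * vdot w a * k ^+ 2); first by ring.
  by rewrite ww exprVn sqr_sqrtr // mulfV.
by rewrite scale1r opprB addrC subrK.
Qed.

Lemma orthomx_reflect_col A (k : 'I_n) : A *m A^T = 1%:M ->
  (forall j : 'I_n, (k < j)%N -> col j A = delta_mx j 0) -> col k A != delta_mx k 0 ->
  forall j : 'I_n, (k <= j)%N ->
    col j (reflmx (normalize (col k A - delta_mx k 0)) *m A) = delta_mx j 0.
Proof.
move=> /mulmx1C AtA fixed neq_k j; rewrite colE -mulmxA -colE.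
have vdot_colA i : vdot (col k A) (col i A) = (k == i)%:R by rewrite vdot_col AtA mxE.
rewrite leq_eqVlt => /orP[/eqP/val_inj<- | lt_kj].
  by rewrite reflmx_swap // vdot_colA vdot_delta mxE !eqxx.
have neq_kj : (k == j) = false by rewrite -val_eqE ltn_eqF.
rewrite (fixed j lt_kj) reflmx_orth // vdotZl [vdot _ (delta_mx j 0)]vdotBl.
rewrite -{1}(fixed j lt_kj) vdot_colA vdot_delta.
by rewrite mxE neq_kj subrr mulr0.
Qed.

Lemma orthomx_prod_reflmx A : A *m A^T = 1%:M ->
  exists2 s, unit_vectors s & \prod_(u <- s) reflmx u = A.
Proof.
suff fix_above k : forall A, A *m A^T = 1%:M ->
    (forall j : 'I_n, (k <= j)%N -> col j A = delta_mx j 0) ->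
    exists2 s, unit_vectors s & \prod_(u <- s) reflmx u = A.
  by move=> AAt; apply: (fix_above n) => // j; rewrite leqNgt ltn_ord.
elim: k => [|k IHk] {}A AAt fixed.
  exists [::] => //; rewrite big_nil; apply/matrixP => i j.
  by have /matrixP/(_ i 0) := fixed j isT; rewrite !mxE => ->; rewrite andbT.
have [le_nk|lt_kn] := leqP n k.
  by apply: IHk => // j; rewrite leqNgt (leq_trans (ltn_ord j)).
pose kk := Ordinal lt_kn.
have [col_k|neq_k] := eqVneq (col kk A) (delta_mx kk 0).
  apply: IHk => // j; rewrite leq_eqVlt => /orP[/eqP eq_kj|]; last exact: fixed.
  by have -> : j = kk by apply: val_inj; rewrite /= -eq_kj.
set u := normalize (col kk A - delta_mx kk 0).
have u1 : unit_vector u by apply: unit_vector_normalize; rewrite subr_eq0.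
have orth_uA : (reflmx u *m A) *m (reflmx u *m A)^T = 1%:M.
  by rewrite trmx_mul reflmx_tr mulmxA -(mulmxA _ A) AAt mulmx1 reflmxK.
have [s s1 prod_s] := IHk _ orth_uA (@orthomx_reflect_col A kk AAt fixed neq_k).
exists (u :: s); first by apply/unit_vectors_cons.
by rewrite big_cons prod_s mulmxE mulrA -mulmxE reflmxK // mul1mx.
Qed.

Lemma det_reflmx u : unit_vector u -> \det (reflmx u) = -1.
Proof.
move=> u1; have utu : u^T *m u = 1%:M by apply/matrixP => i j; rewrite !ord1 u1 mxE.
pose X := block_mx (1%:M : 'M[R]_1) u^T (2 *: u) 1%:M.
have X_lower : block_mx 1%:M 0 (2 *: u) 1%:M *m block_mx 1%:M u^T 0 (reflmx u) = X.
  rewrite mulmx_block !(mul0mx, mulmx0, mul1mx, mulmx1, addr0, add0r) /X.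
  by rewrite /reflmx -scalemxAl addrC subrK.
have X_upper : block_mx 1%:M u^T 0 1%:M *m block_mx (-1)%:M 0 (2 *: u) 1%:M = X.
  rewrite mulmx_block !(mul0mx, mulmx0, mul1mx, mulmx1, addr0, add0r) /X.
  rewrite -scalemxAr utu; congr block_mx.
  by apply/matrixP => i j; rewrite !ord1 !mxE /=; ring.
have := congr1 determinant X_lower.
rewrite det_mulmx det_lblock det_ublock !det1 !mul1r => ->.
by rewrite -X_upper det_mulmx det_ublock det_lblock !det1 det_scalar1 !mul1r mulr1.
Qed.

Lemma det_prod_reflmx s : unit_vectors s ->
  \det (\prod_(u <- s) reflmx u) = (-1) ^+ size s.
Proof.
elim: s => [|u s IHs]; first by rewrite big_nil det1.
case/unit_vectors_cons => u1 s1; rewrite big_cons -[_ * _]/(_ *m _) det_mulmx.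
by rewrite det_reflmx // IHs // exprS.
Qed.
End Reflections.

Section LiftSets.
Variable n : nat.
Implicit Types (A B : {set 'I_n}) (C D : {set 'I_(n + 1)}) (a : 'I_n).
Local Notation symdiff := cl_symdiff.
Local Notation lsh := (@lshift n 1).

Definition ord_last : 'I_(n + 1) := rshift n ord0.

Lemma ord_lastP (P : 'I_(n + 1) -> Prop) :
  (forall a, P (lsh a)) -> P ord_last -> forall i, P i.
Proof.
move=> Plsh Plast i; case: (split_ordP i) => [a ->|k ->]; first exact: Plsh.
by rewrite (ord1 k).
Qed.

(* [cl_lift] below maps [e_A] to [e_A e_last^(|A| mod 2)] = [e_(lift_set A)]. *)
Definition lift_set A : {set 'I_(n + 1)} :=
  [set i | if split i is inl a then a \in A else odd #|A|].

Definition restr_set C : {set 'I_n} := [set a | lsh a \in C].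

Lemma mem_lift_set_lshift a A : (lsh a \in lift_set A) = (a \in A).
Proof. by rewrite inE (unsplitK (inl _ a)). Qed.

Lemma mem_lift_set_last A : (ord_last \in lift_set A) = odd #|A|.
Proof. by rewrite inE (unsplitK (inr _ ord0)). Qed.

Lemma card_restr_set C : #|C| = (#|restr_set C| + (ord_last \in C))%N.
Proof.
rewrite -!sum1_card [in LHS]big_mkcond big_split_ord big_ord1 [in RHS]big_mkcond /=.
by congr (_ + _)%N; apply: eq_bigr => a _; rewrite inE.
Qed.

Lemma restr_lift_set A : restr_set (lift_set A) = A.
Proof. by apply/setP => a; rewrite inE mem_lift_set_lshift. Qed.

Lemma odd_lift_set A : odd #|lift_set A| = false.
Proof. by rewrite card_restr_set restr_lift_set mem_lift_set_last oddD oddb addbb. Qed.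

Lemma lift_set_restr C : ~~ odd #|C| -> lift_set (restr_set C) = C.
Proof.
move=> evenC; apply/setP; apply: ord_lastP => [a|].
  by rewrite mem_lift_set_lshift inE.
by move: evenC; rewrite mem_lift_set_last card_restr_set oddD; case: (_ \in C); case: odd.
Qed.

Lemma eq_lift_set A D : (lift_set A == D) = ~~ odd #|D| && (restr_set D == A).
Proof.
apply/eqP/andP => [<-|[evenD /eqP<-]]; last exact: lift_set_restr.
by rewrite odd_lift_set restr_lift_set.
Qed.

Lemma lift_set_symdiff A B : symdiff (lift_set A) (lift_set B) = lift_set (symdiff A B).
Proof.
apply/setP; apply: ord_lastP => [a|]; first by rewrite !(in_symdiff, mem_lift_set_lshift).
by rewrite in_symdiff !mem_lift_set_last odd_card_symdiff.
Qed.

Lemma lift_set0 : lift_set set0 = set0.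
Proof.
apply/setP; apply: ord_lastP => [a|]; first by rewrite mem_lift_set_lshift !inE.
by rewrite mem_lift_set_last cards0 inE.
Qed.

Lemma blade_sign_lift_set (R : realType) A B :
  blade_sign R (lift_set A) (lift_set B) = blade_sign R A B.
Proof.
have lt_lsh_last a : (ord_last <= lsh a)%N = false by rewrite /= addn0 leqNgt ltn_ord.
rewrite /blade_sign big_split_ord big_ord1 -/ord_last /=.
rewrite [X in _ * X](_ : _ = 1) ?mulr1.
  apply: eq_bigr => a _; rewrite big_split_ord big_ord1 -/ord_last /= lt_lsh_last !andbF mulr1.
  by apply: eq_bigr => b _; rewrite !mem_lift_set_lshift.
rewrite big_split_ord big_ord1 -/ord_last /= !mem_lift_set_last leqnn andbT.
case: (odd #|A|) => /=; last by rewrite big1 ?mul1r.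
under eq_bigr => b _ do rewrite mem_lift_set_lshift addn0 (ltnW (ltn_ord b)) andbT.
by rewrite -sign_card -signr_odd -signr_addb addbb.
Qed.
End LiftSets.

Section CliffordLift.
Variables (R : realType) (n : nat).
Implicit Types (A B : {set 'I_n}) (C D : {set 'I_(n + 1)}) (x y : Cl R n).
Implicit Types (u : 'cV[R]_n) (s : seq 'cV[R]_n).
Local Notation symdiff := cl_symdiff.
Local Notation lsh := (@lshift n 1).
Local Notation e_last := (delta_mx (ord_last n) 0 : 'cV[R]_(n + 1)).

Definition cl_lift x : Cl R (n + 1) :=
  [ffun C : {set 'I_(n + 1)} => if odd #|C| then 0 else x (restr_set C)].

Lemma cl_liftE x C : cl_lift x C = if odd #|C| then 0 else x (restr_set C).
Proof. by rewrite ffunE. Qed.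

Lemma cl_lift_set x A : cl_lift x (lift_set A) = x A.
Proof. by rewrite cl_liftE odd_lift_set restr_lift_set. Qed.

Definition cl_restr (y : Cl R (n + 1)) : Cl R n := [ffun A => y (lift_set A)].

Lemma cl_liftK : cancel cl_lift cl_restr.
Proof. by move=> x; apply/ffunP => A; rewrite ffunE cl_lift_set. Qed.

Lemma sum_lift_set (F : {set 'I_(n + 1)} -> R) :
  (forall C, odd #|C| -> F C = 0) -> \sum_C F C = \sum_A F (lift_set A).
Proof.
move=> F_odd; rewrite (bigID (fun C => odd #|C|)) /= big1 ?add0r //.
rewrite (reindex_onto (@lift_set n) (@restr_set n)) /= => [|C /negbTE evenC]; last first.
  by rewrite lift_set_restr ?evenC.
by apply: eq_bigl => A; rewrite odd_lift_set restr_lift_set eqxx.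
Qed.

Fact cl_lift_is_linear : linear cl_lift.
Proof.
move=> k x y; apply/ffunP => C; rewrite cl_coefD cl_coefZ !cl_liftE !cl_coefD cl_coefZ.
by case: odd; rewrite ?mulr0 ?addr0.
Qed.

HB.instance Definition _ :=
  GRing.isLinear.Build R (Cl R n) (Cl R (n + 1)) *:%R cl_lift cl_lift_is_linear.

Fact cl_lift_is_monoid_morphism : monoid_morphism cl_lift.
Proof.
split.
  apply/ffunP => D; rewrite cl_liftE !cl_oneE.
  have -> : (D == set0) = (lift_set set0 == D) by rewrite lift_set0 eq_sym.
  by rewrite eq_lift_set; case: odd.
move=> x y; apply/ffunP => D; rewrite cl_liftE [RHS]cl_coefM.
rewrite sum_lift_set => [|C oddC]; last first.
  by apply: big1 => E _; rewrite (cl_liftE x C) oddC mulr0 mul0r if_same.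
transitivity (\sum_A \sum_B (if symdiff (lift_set A) (lift_set B) == D then
    blade_sign R (lift_set A) (lift_set B) * cl_lift x (lift_set A) * cl_lift y (lift_set B)
    else 0)); last first.
  apply: eq_bigr => A _; rewrite sum_lift_set // => E oddE.
  by rewrite (cl_liftE y E) oddE mulr0 if_same.
under eq_bigr => A _ do under eq_bigr => B _ do
  rewrite !cl_lift_set lift_set_symdiff blade_sign_lift_set eq_lift_set.
case: (odd #|D|) => /=; first by rewrite big1 // => A _; rewrite big1.
by rewrite cl_coefM; apply: eq_bigr => A _; apply: eq_bigr => B _; rewrite eq_sym.
Qed.

HB.instance Definition _ :=
  GRing.isMonoidMorphism.Build (Cl R n) (Cl R (n + 1)) cl_lift cl_lift_is_monoid_morphism.

Lemma symdiff_lshift_last a :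
  symdiff [set lsh a] [set ord_last n] = lift_set [set a].
Proof.
apply/setP; apply: ord_lastP => [b|]; rewrite in_symdiff.
  by rewrite mem_lift_set_lshift !inE eq_lshift eq_lrshift addbF.
by rewrite mem_lift_set_last cards1 !inE eq_rlshift eqxx.
Qed.

Lemma cl_lift_vec u : cl_lift (cl_vec u) = cl_vec (col_mx u 0) * cl_vec e_last.
Proof.
apply/ffunP => D; rewrite cl_coefM_gen.
transitivity (\sum_C cl_vec (col_mx u 0) C *
    (if symdiff C [set ord_last n] == D then blade_sign R C [set ord_last n] else 0));
  last by apply: eq_bigr => C _; case: ifP => _; rewrite ?mulr0 // mulrC.
rewrite sum_cl_vec big_split_ord big_ord1 /= col_mxEd mxE mul0r addr0 cl_liftE cl_vecE.
under [RHS]eq_bigr => a _ do rewrite col_mxEu symdiff_lshift_last blade_sign11 eq_lift_set.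
case: (odd #|D|) => /=; first by rewrite big1 // => a _; rewrite mulr0.
apply: eq_bigr => a _; rewrite addn0 leqNgt ltn_ord.
by case: (restr_set D == [set a]).
Qed.

Definition lift_seq s : seq 'cV[R]_(n + 1) :=
  flatten [seq [:: col_mx u 0; e_last] | u <- s].

Lemma unit_vectors_lift_seq s : unit_vectors s -> unit_vectors (lift_seq s).
Proof.
have unit_last : unit_vector e_last.
  by rewrite /unit_vector -/(vdot _ _) vdot_delta mxE !eqxx.
elim: s => [|u s IHs] // /unit_vectors_cons[u1 s1] v.
rewrite !inE => /or3P[/eqP->|/eqP->|/(IHs s1)//] //.
by rewrite /unit_vector tr_col_mx mul_row_col mulmx0 addr0.
Qed.

Lemma cl_lift_prod s :
  cl_lift (\prod_(u <- s) cl_vec u) = \prod_(v <- lift_seq s) cl_vec v.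
Proof.
rewrite rmorph_prod big_flatten big_map; apply: eq_bigr => u _.
by rewrite big_cons big_seq1 /= cl_lift_vec.
Qed.

Lemma prod_reflmx_lift_seq s : \prod_(v <- lift_seq s) reflmx v =
  block_mx (\prod_(u <- s) reflmx u) 0 0 ((-1) ^+ size s)%:M.
Proof.
have reflmx_block (a : 'cV[R]_n) (b : 'cV[R]_1) :
    reflmx (col_mx a b) =
    block_mx (reflmx a) (- 2 *: (a *m b^T)) (- 2 *: (b *m a^T)) (reflmx b).
  rewrite /reflmx tr_col_mx mul_col_row (scalar_mx_block n 1) scale_block_mx.
  by rewrite opp_block_mx add_block_mx !sub0r !scaleNr.
have reflmx0 m : reflmx (0 : 'cV[R]_m) = 1%:M by rewrite /reflmx mul0mx scaler0 subr0.
have reflmx_lift u : reflmx (col_mx u (0 : 'cV[R]_1)) = block_mx (reflmx u) 0 0 1%:M.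
  by rewrite reflmx_block trmx0 mulmx0 mul0mx !scaler0 reflmx0.
have reflmx_last : reflmx e_last = block_mx 1%:M 0 0 (-1)%:M.
  have -> : e_last = col_mx 0 1%:M.
    apply/matrixP; apply: ord_lastP => [a|] j; rewrite (ord1 j) !mxE.
      by rewrite eq_lrshift (unsplitK (inl _ a)) mxE.
    by rewrite eqxx (unsplitK (inr _ ord0)) mxE.
  rewrite reflmx_block trmx0 mulmx0 mul0mx !scaler0 reflmx0 /reflmx trmx1 mulmx1.
  by congr block_mx; apply/matrixP => i j; rewrite !ord1 !mxE /=; ring.
elim: s => [|u s IHs]; first by rewrite !big_nil expr0 -scalar_mx_block.
rewrite /lift_seq /= -/(lift_seq s) !big_cons IHs reflmx_lift reflmx_last.
rewrite -[LHS]/(block_mx _ _ _ _ *m (block_mx _ _ _ _ *m block_mx _ _ _ _)) !mulmx_block.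
by rewrite !(mul0mx, mulmx0, add0r, addr0, mul1mx, mulmx1) -scalar_mxM exprS.
Qed.

Lemma rho_cl_lift_prod s : unit_vectors s ->
  rho (cl_lift (\prod_(u <- s) cl_vec u)) =
  block_mx (\prod_(u <- s) reflmx u) 0 0 (\det (\prod_(u <- s) reflmx u))%:M.
Proof.
move=> s1; rewrite cl_lift_prod rho_prod; last exact: unit_vectors_lift_seq.
by rewrite prod_reflmx_lift_seq det_prod_reflmx.
Qed.

Lemma cl_lift_preimage (P : 'M[R]_n) (y : Cl R (n + 1)) :
  (0 < n)%N -> P *m P^T = 1%:M -> in_Pin y -> rho y = block_mx P 0 0 (\det P)%:M ->
  exists2 x, in_Pin x & cl_lift x = y.
Proof.
move=> n_gt0 orthP /in_PinP[t t1 ->] rho_y.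
have [s s1 prod_s] := orthomx_prod_reflmx orthP.
have [lift_eq|lift_opp] : cl_lift (\prod_(u <- s) cl_vec u) = \prod_(v <- t) cl_vec v \/
    cl_lift (\prod_(u <- s) cl_vec u) = - \prod_(v <- t) cl_vec v.
- rewrite cl_lift_prod; apply: cl_prod_pm_of_reflmx => //; first exact: unit_vectors_lift_seq.
  by rewrite prod_reflmx_lift_seq -(rho_prod t1) rho_y -prod_s det_prod_reflmx.
- by exists (\prod_(u <- s) cl_vec u) => //; apply/in_PinP; exists s.
pose e0 : 'cV[R]_n := delta_mx (Ordinal n_gt0) 0.
have e0_1 : unit_vector e0 by rewrite /unit_vector -/(vdot _ _) vdot_delta mxE !eqxx.
exists (\prod_(u <- s ++ [:: e0; e0]) cl_vec u).
  apply/in_PinP; exists (s ++ [:: e0; e0]) => // v.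
  by rewrite mem_cat !inE => /or3P[/s1|/eqP->|/eqP->].
by rewrite big_cat big_cons big_seq1 /= cl_vec_unit_sqr // mulrN1 rmorphN /= lift_opp opprK.
Qed.
End CliffordLift.

Section Spinorial.
Variables (R : realType) (gT : finGroupType) (G : {group gT}) (n : nat).
Implicit Type pi : gT -> 'M[R]_n.

Lemma spinorial_dsum_det pi : spinorial G pi -> spinorial G (dsum_det pi).
Proof.
case=> pihat [pin_hat [hatM rho_hat]].
exists (fun g => cl_lift (pihat g)); split; [|split] => /=.
- move=> g /pin_hat/in_PinP[s s1 ->]; apply/in_PinP; exists (lift_seq s).
    exact: unit_vectors_lift_seq.
  exact: cl_lift_prod.
- by move=> g h Gg Gh; rewrite hatM // rmorphM.
- move=> g Gg; have /in_PinP[s s1 hat_g] := pin_hat g Gg.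
  by rewrite /dsum_det -rho_hat // hat_g rho_cl_lift_prod // rho_prod.
Qed.

Lemma spinorial_of_dsum_det pi : (forall g, g \in G -> pi g *m (pi g)^T = 1%:M) ->
  spinorial G (dsum_det pi) -> spinorial G pi.
Proof.
move=> orth_pi [pihat [pin_hat [hatM rho_hat]]].
have [n0|n_gt0] := posnP n.
  exists (fun _ => 1); split; [|split] => [g _|g h _ _|g _].
  - by apply/in_PinP; exists [::]; rewrite ?big_nil.
  - exact: esym (mulr1 _).
  - by apply/matrixP => i; have := ltn_ord i; rewrite {2}n0.
have lift_hat g : g \in G -> exists2 x, in_Pin x & cl_lift x = pihat g.
  by move=> Gg; apply: cl_lift_preimage (orth_pi g Gg) (pin_hat g Gg) (rho_hat g Gg).
have hatK g : g \in G -> cl_lift (cl_restr (pihat g)) = pihat g.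
  by case/lift_hat => x _ <-; rewrite cl_liftK.
exists (fun g => cl_restr (pihat g)); split; [|split] => /=.
- by move=> g /lift_hat[x Px <-]; rewrite cl_liftK.
- move=> g h Gg Gh; apply: (can_inj (@cl_liftK R n)).
  by rewrite rmorphM /= !hatK ?groupM // hatM.
- move=> g Gg; have [x /in_PinP[s s1 ->] hat_g] := lift_hat g Gg.
  have := rho_hat g Gg; rewrite -hat_g rho_cl_lift_prod // /dsum_det => /(congr1 ulsubmx).
  by rewrite !block_mxKul cl_liftK rho_prod.
Qed.
End Spinorial.

Theorem lemma6p2 (R : realType) (gT : finGroupType) (G : {group gT}) (n : nat)
    (pi : gT -> 'M[R]_n) :
  orth_rep G pi ->
  (spinorial G pi <-> spinorial G (dsum_det pi)).
Proof.
case=> orth_pi _; split; first exact: spinorial_dsum_det.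
exact: spinorial_of_dsum_det.
Qed.
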